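(* There is a function $\varepsilon(r)\to0$ as $r\to\infty$ such that for every positive integer $r$ and every family $F$ of functions from a set $X$ to $\{0,1\}$, \[\mathrm{opt}_{\mathrm{amb},r}(F)\le \mathrm{opt}_{\mathrm{std}}(F)\,2^r\ln r\,(1+\varepsilon(r)).\]
   Context: Let $F$ be a family of functions from $X$ to $Y$. In online learning an adversary secretly fixes $f\in F$ and presents inputs; the learner guesses values of $f$. In the standard model each input is presented singly and after the guess the true value is revealed; $\mathrm{opt}_{\mathrm{std}}(F)$ is the maximum number of incorrect guesses under optimal play by both sides. In the $r$-delayed ambiguous reinforcement model, each round $i$ consists of $r$ inputs $x_{i,1},\dots,x_{i,r}$ given one at a time: the learner must guess $f(x_{i,j})$ before receiving $x_{i,j+1}$; after all $r$ guesses the adversary says YES if all $r$ guesses were correct and NO otherwise. A mistake is a round with answer NO. $\mathrm{opt}_{\mathrm{amb},r}(F)$ is the maximum number of mistakes under optimal play by both learner and adversary (answers consistent with some $f\in F$). *)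

From Stdlib Require Import Reals Arith.
Set Implicit Arguments.

(* Standard model.  [std_forces G k]: starting with version space G
   (the functions of F consistent with all information revealed so far),
   the adversary has a strategy forcing at least k mistakes against every
   learner.  A trial: the adversary chooses x; for every guess y of the
   learner the adversary reveals a value v consistent with some function
   of G; a mistake occurs when v <> y.  The inductive (least fixed point)
   reading means the k mistakes are forced in finitely many trials. *)
Inductive std_forces {X : Type} : ((X -> bool) -> Prop) -> nat -> Prop :=
| std_zero G : std_forces G 0
| std_step G k (x : X) :
    (forall y : bool, exists v : bool,
        (exists f, G f /\ f x = v) /\
        std_forces (fun f => G f /\ f x = v) (if Bool.eqb v y then k else pred k)) ->
    std_forces G k.

(* r-delayed ambiguous reinforcement model.
   [amb_win r j P G k]: we are inside a round in which j inputs remain to be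
   presented; P f holds iff all guesses made so far in this round agree with
   f on the corresponding inputs; G is the version space at the start of the
   round.  The adversary can force k more mistakes (rounds answered NO). *)
Inductive amb_win {X : Type} (r : nat) :
  nat -> ((X -> bool) -> Prop) -> ((X -> bool) -> Prop) -> nat -> Prop :=
| amb_zero j P G : amb_win r j P G 0
| amb_input j P G k (x : X) :
    (forall y : bool, amb_win r j (fun f => P f /\ f x = y) G k) ->
    amb_win r (S j) P G k
| amb_yes P G k :
    (exists f, G f /\ P f) ->
    amb_win r r (fun _ => True) (fun f => G f /\ P f) k ->
    amb_win r 0 P G k
| amb_no P G k :
    (exists f, G f /\ ~ P f) ->
    amb_win r r (fun _ => True) (fun f => G f /\ ~ P f) k ->
    amb_win r 0 P G (S k).

Definition amb_forces {X : Type} (r : nat) (F : (X -> bool) -> Prop) (k : nat) : Prop :=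
  amb_win r r (fun _ => True) F k.

Definition opt_std_le {X : Type} (F : (X -> bool) -> Prop) (d : nat) : Prop :=
  forall m, std_forces F m -> (m <= d)%nat.

(* The learner covers the version space by pieces A, each with a bound e such
   that opt_std(A) < e, weighted lam^(e-1).  Within a round each piece that
   the guesses have followed so far ("marked") predicts by Littlestone's
   standard optimal algorithm on its part consistent with the guesses, and the
   learner guesses the weighted majority of the marked pieces; so after i
   inputs the marked weight is at least 2^-i times the total weight.  A marked
   piece records, at each input, the functions on which its prediction fails,
   a class of standard bound e - 1; an overruled piece keeps only such a class.
   After YES an overruled piece is replaced by that class.  After NO every
   marked piece is replaced by its r recorded classes, so the total weight
   drops by the factor 1 - (1 - r/lam) 2^-r.  Starting from weight lam^d, k
   mistakes force k (1 - r/lam) 2^-r <= d ln lam, and lam = r (1 + sqrt(ln r))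
   gives k <= d 2^r (1 + sqrt(ln r))^2 = d 2^r ln r (1 + 2/sqrt(ln r) + 1/ln r). *)

From Stdlib Require Import Reals Arith Lia List Classical ClassicalDescription Lra.
Import ListNotations.
Set Implicit Arguments.
Unset Strict Implicit.
Open Scope R_scope.

Definition sumR {A : Type} (g : A -> R) (l : list A) : R :=
  fold_right (fun a s => g a + s) 0 l.

Section Sums.
Context {A : Type}.
Implicit Types (g h : A -> R) (l : list A).

Lemma sumR_app g l1 l2 : sumR g (l1 ++ l2) = sumR g l1 + sumR g l2.
Proof. induction l1 as [|a l1 IH]; simpl; [lra | rewrite IH; lra]. Qed.

Lemma sumR_const (c : R) l : sumR (fun _ => c) l = INR (length l) * c.
Proof.
  induction l as [|a l IH]; simpl length; [simpl; lra|].
  rewrite S_INR. simpl. rewrite IH. lra.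
Qed.

Lemma sumR_sub_scal g h (c : R) l :
  sumR (fun a => g a - c * h a) l = sumR g l - c * sumR h l.
Proof. induction l as [|a l IH]; simpl; [lra | rewrite IH; lra]. Qed.

Lemma sumR_le g h l : (forall a, In a l -> g a <= h a) -> sumR g l <= sumR h l.
Proof.
  induction l as [|a l IH]; simpl; intros H; [lra|].
  pose proof (H a (or_introl eq_refl)). pose proof (IH (fun b Hb => H b (or_intror Hb))). lra.
Qed.

Lemma sumR_ext g h l : (forall a, In a l -> g a = h a) -> sumR g l = sumR h l.
Proof. intros H. apply Rle_antisym; apply sumR_le; intros a Ha; rewrite (H a Ha); lra. Qed.

Lemma sumR_nonneg g l : (forall a, 0 <= g a) -> 0 <= sumR g l.
Proof. intros Hg. induction l as [|a l IH]; simpl; [lra | pose proof (Hg a); lra]. Qed.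

Lemma sumR_In g l a : (forall b, 0 <= g b) -> In a l -> g a <= sumR g l.
Proof.
  intros Hg. induction l as [|b l IH]; simpl; [tauto|]. intros [<-|Ha].
  - pose proof (sumR_nonneg l Hg). lra.
  - pose proof (IH Ha). pose proof (Hg b). lra.
Qed.

Lemma sumR_majority g (s : A -> bool) l :
  exists y, sumR g l <= 2 * sumR (fun a => if Bool.eqb (s a) y then g a else 0) l.
Proof.
  set (part y := sumR (fun a => if Bool.eqb (s a) y then g a else 0) l).
  assert (E : sumR g l = part true + part false).
  { unfold part. induction l as [|a l IH]; simpl; [lra|]. rewrite IH. destruct (s a); simpl; lra. }
  destruct (Rle_or_lt (part false) (part true)); [exists true | exists false];
    unfold part in *; lra.
Qed.

End Sums.

Lemma sumR_map {A B : Type} (g : B -> R) (f : A -> B) (l : list A) :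
  sumR g (map f l) = sumR (fun a => g (f a)) l.
Proof. induction l as [|a l IH]; simpl; [reflexivity | rewrite IH; reflexivity]. Qed.

Lemma sumR_flat_map {A B : Type} (g : B -> R) (f : A -> list B) (l : list A) :
  sumR g (flat_map f l) = sumR (fun a => sumR g (f a)) l.
Proof.
  induction l as [|a l IH]; [reflexivity|].
  simpl flat_map. rewrite sumR_app, IH. reflexivity.
Qed.

Section StandardModel.
Context {X : Type}.
Implicit Types (A B : (X -> bool) -> Prop).

Lemma std_forces_le A m : std_forces A m -> forall m', (m' <= m)%nat -> std_forces A m'.
Proof.
  revert A m. fix IH 3. intros A m Hm m' Hle. destruct Hm as [A|A m x Hx].
  - replace m' with 0%nat by lia. constructor.
  - apply (std_step _ m' (x := x)). intros y. destruct (Hx y) as [v [Hv Hm]].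
    exists v. split; [exact Hv|]. apply (IH _ _ Hm). destruct (Bool.eqb v y); lia.
Qed.

Lemma std_forces_mono A B m : (forall f, A f -> B f) -> std_forces A m -> std_forces B m.
Proof.
  intros HAB Hm. revert A m Hm B HAB. fix IH 3. intros A m Hm B HAB. destruct Hm as [A|A m x Hx].
  - constructor.
  - apply (std_step _ m (x := x)). intros y. destruct (Hx y) as [v [[f [Af fx]] Hm]].
    exists v. split; [exists f; auto|]. apply (IH _ _ Hm). intros g [Ag gx]. auto.
Qed.

Lemma std_forces_S_of_halves A m x :
  (forall v, (exists f, A f /\ f x = v) /\ std_forces (fun f => A f /\ f x = v) m) ->
  std_forces A (S m).
Proof.
  intros H. apply (std_step _ _ (x := x)). intros y. exists (negb y).
  destruct (H (negb y)) as [Hne Hm]. split; [exact Hne|]. destruct y; exact Hm.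
Qed.

(* Empty classes satisfy every bound, including 0. *)
Definition opt_std_lt A (e : nat) : Prop :=
  forall m, std_forces A m -> (exists f, A f) -> (m < e)%nat.

Lemma opt_std_le_lt A d : opt_std_le A d -> opt_std_lt A (S d).
Proof. intros H m Hm _. specialize (H m Hm). lia. Qed.

Lemma opt_std_lt_mono A B e : (forall f, B f -> A f) -> opt_std_lt A e -> opt_std_lt B e.
Proof.
  intros HBA HA m Hm [f Bf]. apply HA; [exact (std_forces_mono HBA Hm) | exists f; auto].
Qed.

Lemma opt_std_lt_gt0 A e f : opt_std_lt A e -> A f -> (0 < e)%nat.
Proof. intros HA Af. apply (HA 0%nat); [constructor | exists f; exact Af]. Qed.

Lemma not_opt_std_lt A e : ~ opt_std_lt A e -> (exists f, A f) /\ std_forces A e.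
Proof.
  intros H. apply NNPP. intros Hn. apply H. intros m Hm Hne.
  destruct (le_lt_dec e m) as [Hle|Hlt]; [|exact Hlt].
  exfalso. apply Hn. split; [exact Hne | exact (std_forces_le Hm Hle)].
Qed.

Lemma opt_std_lt_restrict A e x :
  opt_std_lt A e -> exists s, opt_std_lt (fun f => A f /\ f x = negb s) (pred e).
Proof.
  intros HA. apply NNPP. intros Hn.
  assert (Hv : forall v, (exists f, A f /\ f x = v) /\
                         std_forces (fun f => A f /\ f x = v) (pred e)).
  { intros v. apply not_opt_std_lt. intros Hv. apply Hn. exists (negb v).
    rewrite Bool.negb_involutive. exact Hv. }
  destruct (Hv true) as [[f [Af _]] _].
  pose proof (opt_std_lt_gt0 HA Af).
  assert (He : std_forces A e).
  { replace e with (S (pred e)) by lia. exact (std_forces_S_of_halves Hv). }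
  specialize (HA e He (ex_intro _ f Af)). lia.
Qed.

(* Littlestone's Standard Optimal Algorithm: a mistake on [x] leaves a class
   of standard bound [e - 1]. *)
Definition soa A e (x : X) : bool :=
  if excluded_middle_informative (opt_std_lt (fun f => A f /\ f x = false) (pred e))
  then true else false.

Lemma soa_spec A e x :
  opt_std_lt A e -> opt_std_lt (fun f => A f /\ f x = negb (soa A e x)) (pred e).
Proof.
  intros HA. unfold soa. destruct excluded_middle_informative as [H|H]; [exact H|].
  destruct (opt_std_lt_restrict x HA) as [[|] Hs]; [contradiction | exact Hs].
Qed.

End StandardModel.

Lemma amb_win_inhabited {X : Type} r j (P G : (X -> bool) -> Prop) k :
  amb_win r j P G k -> (0 < k)%nat -> exists f, G f.
Proof.
  induction 1 as [j P G | j P G k x _ IH | P G k _ _ IH | P G k Hex _ _]; intros Hk.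
  - lia.
  - exact (IH true Hk).
  - destruct (IH Hk) as [f [Gf _]]. exists f; exact Gf.
  - destruct Hex as [f [Gf _]]. exists f; exact Gf.
Qed.

Section Potential.
Context {X : Type}.
Variables (r : nat) (lam : R).
Hypothesis lam_ge1 : 1 <= lam.
Hypothesis r_le_lam : INR r <= lam.

Definition weight (e : nat) : R := match e with O => 0 | S n => lam ^ n end.

Lemma weight_nonneg e : 0 <= weight e.
Proof. destruct e; simpl; [lra | apply pow_le; lra]. Qed.

Lemma weight_ge1 e : (0 < e)%nat -> 1 <= weight e.
Proof. destruct e as [|n]; [lia|]. intros _. simpl. apply pow_R1_Rle. exact lam_ge1. Qed.

Lemma weight_pred e : lam * weight (pred e) <= weight e.
Proof. destruct e as [|[|n]]; simpl; lra. Qed.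

Lemma weight_pred_le e : weight (pred e) <= weight e.
Proof. pose proof (weight_pred e). pose proof (weight_nonneg (pred e)). nra. Qed.

(* [Marked A e cs]: the guesses of the current round have so far followed the
   SOA prediction of the piece, and [cs] records, one per input, the functions
   of [A] on which that prediction was wrong.  [Unmarked A e C]: the piece was
   overruled at some input; [C] contains its functions consistent with all
   guesses. *)
Inductive piece : Type :=
| Marked (A : (X -> bool) -> Prop) (e : nat) (cs : list ((X -> bool) -> Prop))
| Unmarked (A : (X -> bool) -> Prop) (e : nat) (C : (X -> bool) -> Prop).

Definition piece_cls p := match p with Marked A _ _ | Unmarked A _ _ => A end.
Definition piece_bound p := match p with Marked _ e _ | Unmarked _ e _ => e end.
Definition piece_weight p := weight (piece_bound p).
Definition marked_weight p := match p with Marked _ e _ => weight e | Unmarked _ _ _ => 0 end.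

Definition piece_ok (j : nat) (P : (X -> bool) -> Prop) (p : piece) : Prop :=
  match p with
  | Marked A e cs =>
      opt_std_lt A e /\ length cs = (r - j)%nat /\
      (forall c, In c cs -> opt_std_lt c (pred e)) /\
      (forall f, A f -> ~ P f -> exists c, In c cs /\ c f)
  | Unmarked A e C =>
      opt_std_lt A e /\ opt_std_lt C (pred e) /\ (forall f, A f -> P f -> C f)
  end.

Definition fresh_piece_ok (p : piece) : Prop :=
  match p with Marked A e cs => cs = [] /\ opt_std_lt A e | Unmarked _ _ _ => False end.

Definition covers (G : (X -> bool) -> Prop) (l : list piece) : Prop :=
  forall f, G f -> exists p, In p l /\ piece_cls p f.

(* [j] inputs of the round are still to come.  Since the learner follows the
   weighted majority of the marked pieces, each of the [r - j] inputs seen so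
   far kept at least half of the marked weight. *)
Definition potential_inv j P G (l : list piece) : Prop :=
  (j <= r)%nat /\ covers G l /\ (forall p, In p l -> piece_ok j P p) /\
  (/2) ^ (r - j) * sumR piece_weight l <= sumR marked_weight l.

Lemma piece_ok_bound j P p : piece_ok j P p -> opt_std_lt (piece_cls p) (piece_bound p).
Proof. destruct p; simpl; tauto. Qed.

Lemma potential_inv_weight_ge1 j P G l f :
  potential_inv j P G l -> G f -> 1 <= sumR piece_weight l.
Proof.
  intros [_ [Hcov [Hok _]]] Gf. destruct (Hcov f Gf) as [p [Hp Hpf]].
  pose proof (weight_ge1 (opt_std_lt_gt0 (piece_ok_bound (Hok p Hp)) Hpf)).
  pose proof (sumR_In (g := piece_weight) (fun q => weight_nonneg (piece_bound q)) Hp).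
  unfold piece_weight in *. lra.
Qed.

Lemma potential_inv_fresh G l :
  covers G l -> (forall p, In p l -> fresh_piece_ok p) -> potential_inv r (fun _ => True) G l.
Proof.
  intros Hcov Hl. split; [lia|]. split; [exact Hcov|]. rewrite Nat.sub_diag, Rmult_1_l. split.
  - intros p Hp. specialize (Hl p Hp). destruct p as [A e cs|]; [|contradiction].
    destruct Hl as [-> HA]. simpl. rewrite Nat.sub_diag.
    repeat split; [exact HA | contradiction | tauto].
  - right. apply sumR_ext. intros p Hp. specialize (Hl p Hp).
    destruct p; [reflexivity | contradiction].
Qed.

Definition soa_piece (x : X) (P : (X -> bool) -> Prop) (p : piece) : bool :=
  soa (fun f => piece_cls p f /\ P f) (piece_bound p) x.

Definition input_update x P (y : bool) (p : piece) : piece :=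
  match p with
  | Marked A e cs =>
      let s := soa (fun f => A f /\ P f) e x in
      let wrong := fun f => (A f /\ P f) /\ f x = negb s in
      if Bool.eqb s y then Marked A e (wrong :: cs) else Unmarked A e wrong
  | Unmarked _ _ _ => p
  end.

Lemma input_update_cls x P y p : piece_cls (input_update x P y p) = piece_cls p.
Proof. destruct p; simpl; [destruct Bool.eqb|]; reflexivity. Qed.

Lemma input_update_weight x P y p : piece_weight (input_update x P y p) = piece_weight p.
Proof. destruct p; simpl; [destruct Bool.eqb|]; reflexivity. Qed.

Lemma input_update_marked_weight x P y p :
  marked_weight (input_update x P y p) =
  if Bool.eqb (soa_piece x P p) y then marked_weight p else 0.
Proof. destruct p; simpl; [destruct Bool.eqb | destruct Bool.eqb]; reflexivity. Qed.

Lemma input_update_ok j x P y p : (S j <= r)%nat ->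
  piece_ok (S j) P p -> piece_ok j (fun f => P f /\ f x = y) (input_update x P y p).
Proof.
  intros Hj. destruct p as [A e cs|A e C]; simpl.
  - intros [HA [Hlen [Hcs Hcov]]].
    set (s := soa (fun f => A f /\ P f) e x).
    assert (Hs : opt_std_lt (fun f => (A f /\ P f) /\ f x = negb s) (pred e)).
    { apply soa_spec. apply (opt_std_lt_mono (A := A)); [tauto | exact HA]. }
    destruct (Bool.eqb s y) eqn:Esy; simpl.
    + apply Bool.eqb_prop in Esy.
      split; [exact HA|]. split; [simpl; lia|]. split.
      * intros c [<-|Hc]; [exact Hs | exact (Hcs c Hc)].
      * intros f Af Hf. destruct (classic (P f)) as [Pf|nPf].
        -- eexists; split; [left; reflexivity|]. split; [tauto|].
           destruct (f x), s, y; simpl in *; tauto || congruence.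
        -- destruct (Hcov f Af nPf) as [c [Hc Hcf]]. exists c; split; [right|]; assumption.
    + split; [exact HA|]. split; [exact Hs|]. intros f Af [Pf Hfx]. split; [tauto|].
      rewrite Hfx. destruct s, y; simpl in *; congruence.
  - intros [HA [HC HAC]]. split; [exact HA|]. split; [exact HC|]. intros f Af [Pf _]. auto.
Qed.

Lemma potential_inv_input j x P G l : potential_inv (S j) P G l ->
  exists y, potential_inv j (fun f => P f /\ f x = y) G (map (input_update x P y) l).
Proof.
  intros [Hj [Hcov [Hok Hw]]].
  destruct (sumR_majority marked_weight (soa_piece x P) l) as [y Hy].
  exists y. split; [lia|]. split; [|split].
  - intros f Gf. destruct (Hcov f Gf) as [p [Hp Hpf]].
    exists (input_update x P y p). rewrite input_update_cls. split; [apply in_map|]; assumption.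
  - intros q Hq. apply in_map_iff in Hq. destruct Hq as [p [<- Hp]].
    apply input_update_ok; [lia | exact (Hok p Hp)].
  - rewrite !sumR_map.
    rewrite (sumR_ext (fun p _ => input_update_weight x P y p)).
    rewrite (sumR_ext (fun p _ => input_update_marked_weight x P y p)).
    replace (r - j)%nat with (S (r - S j)) by lia. simpl pow. rewrite Rmult_assoc. lra.
Qed.

Definition yes_update (p : piece) : piece :=
  match p with
  | Marked A e _ => Marked A e []
  | Unmarked _ e C => Marked C (pred e) []
  end.

Lemma potential_inv_yes P G l : potential_inv 0 P G l ->
  potential_inv r (fun _ => True) (fun f => G f /\ P f) (map yes_update l) /\
  sumR piece_weight (map yes_update l) <= sumR piece_weight l.
Proof.
  intros [_ [Hcov [Hok _]]]. split.
  - apply potential_inv_fresh.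
    + intros f [Gf Pf]. destruct (Hcov f Gf) as [p [Hp Hpf]].
      exists (yes_update p). split; [apply in_map; exact Hp|].
      specialize (Hok p Hp). destruct p; simpl in *; [exact Hpf | apply Hok; assumption].
    + intros q Hq. apply in_map_iff in Hq. destruct Hq as [p [<- Hp]].
      specialize (Hok p Hp). destruct p; simpl in *; tauto.
  - rewrite sumR_map. apply sumR_le. intros p _.
    destruct p; unfold piece_weight; simpl; [lra | apply weight_pred_le].
Qed.

Definition no_update (p : piece) : list piece :=
  match p with
  | Marked _ e cs => map (fun c => Marked c (pred e) []) cs
  | Unmarked A e _ => [Marked A e []]
  end.

Definition rate : R := (1 - INR r / lam) * (/2) ^ r.

Lemma ratio_bounds : 0 <= INR r / lam <= 1.
Proof.
  pose proof (pos_INR r). assert (0 < lam) by lra. unfold Rdiv. split.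
  - apply Rmult_le_pos; [lra | left; apply Rinv_0_lt_compat; lra].
  - apply (Rmult_le_reg_r lam); [lra|]. rewrite Rmult_assoc, Rinv_l; lra.
Qed.

Lemma rate_bounds : 0 <= rate <= 1.
Proof.
  unfold rate. pose proof ratio_bounds.
  assert (0 <= (/2) ^ r <= 1).
  { split; [apply pow_le; lra | rewrite <- (pow1 r); apply pow_incr; lra]. }
  split; nra.
Qed.

(* The [r] recorded classes of a marked piece have standard bound [e - 1],
   hence weight at most [weight e / lam] each. *)
Lemma no_update_weight P p : piece_ok 0 P p ->
  sumR piece_weight (no_update p) <= piece_weight p - (1 - INR r / lam) * marked_weight p.
Proof.
  destruct p as [A e cs|A e C]; simpl; intros Hok.
  - destruct Hok as [_ [Hlen _]]. rewrite sumR_map. unfold piece_weight. simpl.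
    rewrite sumR_const, Hlen, Nat.sub_0_r.
    pose proof (weight_pred e). pose proof (pos_INR r).
    replace (weight e - (1 - INR r / lam) * weight e) with (INR r / lam * (weight e)) by ring.
    replace (INR r * weight (pred e)) with (INR r / lam * (lam * weight (pred e))) by (field; lra).
    apply Rmult_le_compat_l; [apply ratio_bounds | assumption].
  - unfold piece_weight. simpl. lra.
Qed.

Lemma potential_inv_no P G l : potential_inv 0 P G l ->
  potential_inv r (fun _ => True) (fun f => G f /\ ~ P f) (flat_map no_update l) /\
  sumR piece_weight (flat_map no_update l) <= (1 - rate) * sumR piece_weight l.
Proof.
  intros [_ [Hcov [Hok Hw]]]. split.
  - apply potential_inv_fresh.
    + intros f [Gf nPf]. destruct (Hcov f Gf) as [p [Hp Hpf]].
      pose proof (Hok p Hp) as Hokp. destruct p as [A e cs|A e C]; simpl in Hpf, Hokp.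
      * destruct Hokp as [_ [_ [_ Hcs]]]. destruct (Hcs f Hpf nPf) as [c [Hc Hcf]].
        exists (Marked c (pred e) []). split; [|exact Hcf]. apply in_flat_map.
        exists (Marked A e cs). split; [exact Hp|].
        apply (in_map (fun c => Marked c _ [])). exact Hc.
      * exists (Marked A e []). split; [|exact Hpf]. apply in_flat_map.
        exists (Unmarked A e C). split; [exact Hp | left; reflexivity].
    + intros q Hq. apply in_flat_map in Hq. destruct Hq as [p [Hp Hq]].
      pose proof (Hok p Hp) as Hokp. destruct p; simpl in Hq, Hokp.
      * apply in_map_iff in Hq. destruct Hq as [c [<- Hc]]. simpl.
        split; [reflexivity | apply Hokp; exact Hc].
      * destruct Hq as [<-|[]]. simpl. tauto.
  - rewrite sumR_flat_map. eapply Rle_trans.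
    { apply sumR_le. intros p Hp. exact (no_update_weight (Hok p Hp)). }
    rewrite sumR_sub_scal. rewrite Nat.sub_0_r in Hw. unfold rate.
    pose proof ratio_bounds. nra.
Qed.

Lemma amb_win_potential j P G k : amb_win r j P G k ->
  forall l, potential_inv j P G l -> (exists f, G f) ->
  1 <= (1 - rate) ^ k * sumR piece_weight l.
Proof.
  pose proof rate_bounds.
  induction 1 as [j P G | j P G k x _ IH | P G k Hex _ IH | P G k Hex _ IH];
    intros l Hl [f Gf].
  - rewrite pow_O, Rmult_1_l. exact (potential_inv_weight_ge1 Hl Gf).
  - destruct (potential_inv_input x Hl) as [y Hy].
    rewrite <- (sumR_ext (fun p _ => input_update_weight x P y p)), <- sumR_map.
    apply (IH y _ Hy). exists f; exact Gf.
  - destruct (potential_inv_yes Hl) as [Hl' Hle].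
    apply (Rle_trans _ _ _ (IH _ Hl' Hex)).
    apply Rmult_le_compat_l; [apply pow_le; lra | exact Hle].
  - destruct (potential_inv_no Hl) as [Hl' Hle].
    apply (Rle_trans _ _ _ (IH _ Hl' Hex)).
    rewrite <- tech_pow_Rmult, (Rmult_comm (1 - rate)), Rmult_assoc.
    apply Rmult_le_compat_l; [apply pow_le; lra | exact Hle].
Qed.

Lemma amb_forces_potential (F : (X -> bool) -> Prop) d k :
  opt_std_le F d -> amb_forces r F k -> (0 < k)%nat -> 1 <= (1 - rate) ^ k * lam ^ d.
Proof.
  intros Hd Hk Hk0.
  replace (lam ^ d) with (sumR piece_weight [Marked F (S d) []])
    by (unfold sumR, piece_weight; simpl; ring).
  apply (amb_win_potential Hk).
  - apply potential_inv_fresh.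
    + intros f Ff. exists (Marked F (S d) []). split; [left; reflexivity | exact Ff].
    + intros p [<-|[]]. split; [reflexivity | exact (opt_std_le_lt Hd)].
  - exact (amb_win_inhabited Hk Hk0).
Qed.

End Potential.

Lemma ln_le_sub1 x : 0 < x -> ln x <= x - 1.
Proof.
  intros Hx. destruct (Rle_or_lt (ln x) (x - 1)) as [H|H]; [exact H|].
  apply exp_increasing in H. rewrite exp_ln in H by exact Hx.
  pose proof (exp_ineq1_le (x - 1)). lra.
Qed.

Lemma ln_ge0 x : 1 <= x -> 0 <= ln x.
Proof.
  intros Hx. destruct (Rle_or_lt 0 (ln x)) as [H|H]; [exact H|].
  rewrite <- ln_1 in H. apply ln_lt_inv in H; lra.
Qed.

Lemma mistakes_le_of_potential (c lam : R) (d k : nat) :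
  0 < c < 1 -> 0 < lam -> 1 <= (1 - c) ^ k * lam ^ d -> INR k * c <= INR d * ln lam.
Proof.
  intros Hc Hlam H. apply ln_ge0 in H.
  rewrite ln_mult, !ln_pow in H by (try apply pow_lt; lra).
  assert (ln (1 - c) <= - c) by (pose proof (ln_le_sub1 (x := 1 - c) ltac:(lra)); lra).
  pose proof (pos_INR k). nra.
Qed.

Lemma rate_one_plus (r : nat) (s : R) : (0 < r)%nat -> 0 < s ->
  rate r (INR r * (1 + s)) = s / (1 + s) / 2 ^ r.
Proof.
  intros Hr Hs. apply lt_0_INR in Hr. unfold rate. rewrite pow_inv. field.
  repeat split; try apply pow_nonzero; lra.
Qed.

Lemma ln_INR_pos r : (2 <= r)%nat -> 0 < ln (INR r).
Proof.
  intros Hr. apply (le_INR 2) in Hr. simpl in Hr.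
  rewrite <- ln_1. apply ln_increasing; lra.
Qed.

Lemma mistakes_le_rate_one_plus (r d k : nat) (s : R) : (0 < r)%nat -> 0 < s ->
  1 <= (1 - rate r (INR r * (1 + s))) ^ k * (INR r * (1 + s)) ^ d ->
  INR k * s <= INR d * 2 ^ r * (1 + s) * (ln (INR r) + s).
Proof.
  intros Hr Hs Hpot. rewrite rate_one_plus in Hpot by assumption.
  apply lt_0_INR in Hr.
  assert (H2r : 1 <= 2 ^ r) by (apply pow_R1_Rle; lra).
  set (c := s / (1 + s) / 2 ^ r) in Hpot.
  assert (Hcs : c * ((1 + s) * 2 ^ r) = s) by (unfold c; field; lra).
  assert (Hc : 0 < c < 1).
  { assert (HM : s < (1 + s) * 2 ^ r) by nra.
    split; [unfold c; repeat apply Rdiv_lt_0_compat; lra|].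
    apply (Rmult_lt_reg_r ((1 + s) * 2 ^ r)); [lra | rewrite Hcs; lra]. }
  assert (Hlam : 0 < INR r * (1 + s)) by nra.
  pose proof (mistakes_le_of_potential Hc Hlam Hpot) as Hkc.
  assert (Hln : ln (INR r * (1 + s)) <= ln (INR r) + s).
  { rewrite ln_mult by lra. pose proof (ln_le_sub1 (x := 1 + s) ltac:(lra)). lra. }
  replace (INR k * s) with (INR k * c * ((1 + s) * 2 ^ r)) by (rewrite Rmult_assoc, Hcs; ring).
  replace (INR d * 2 ^ r * (1 + s) * (ln (INR r) + s))
    with (INR d * (ln (INR r) + s) * ((1 + s) * 2 ^ r)) by ring.
  apply Rmult_le_compat_r; [nra|].
  apply (Rle_trans _ _ _ Hkc). apply Rmult_le_compat_l; [apply pos_INR | exact Hln].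
Qed.

Lemma amb_mistakes_le (r : nat) {X : Type} (F : (X -> bool) -> Prop) d k : (2 <= r)%nat ->
  opt_std_le F d -> amb_forces r F k ->
  INR k <= INR d * 2 ^ r * (1 + sqrt (ln (INR r))) ^ 2.
Proof.
  intros Hr Hd Hk. pose proof (ln_INR_pos Hr) as HL.
  assert (HrR : 2 <= INR r) by (apply (le_INR 2) in Hr; exact Hr).
  set (s := sqrt (ln (INR r))).
  assert (Hs : 0 < s) by (apply sqrt_lt_R0; exact HL).
  assert (Hss : ln (INR r) = s * s) by (symmetry; apply sqrt_sqrt; lra).
  pose proof (pos_INR d). pose proof (pow_lt 2 r ltac:(lra)).
  destruct (Nat.eq_0_gt_0_cases k) as [->|Hk0].
  { simpl. apply Rmult_le_pos; [apply Rmult_le_pos; lra | apply pow2_ge_0]. }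
  assert (Hlam : INR r <= INR r * (1 + s)) by nra.
  pose proof (amb_forces_potential (lam := INR r * (1 + s)) ltac:(lra) Hlam Hd Hk Hk0) as Hpot.
  apply mistakes_le_rate_one_plus in Hpot; [|lia | exact Hs].
  rewrite Hss in Hpot. apply (Rmult_le_reg_r s); [exact Hs|]. nra.
Qed.

Definition overhead (n : nat) : R := 2 / sqrt (ln (INR n)) + / ln (INR n).

Lemma ln_mul_one_plus_overhead r : (2 <= r)%nat ->
  ln (INR r) * (1 + overhead r) = (1 + sqrt (ln (INR r))) ^ 2.
Proof.
  intros Hr. pose proof (ln_INR_pos Hr) as HL. unfold overhead.
  set (s := sqrt (ln (INR r))).
  assert (Hs : 0 < s) by (apply sqrt_lt_R0; exact HL).
  assert (Hss : ln (INR r) = s * s) by (symmetry; apply sqrt_sqrt; lra).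
  rewrite Hss. field. lra.
Qed.

Lemma cv_infty_ln_INR : cv_infty (fun n => ln (INR n)).
Proof.
  intros M. destruct (INR_unbounded (exp M)) as [N HN]. exists N. intros n Hn.
  apply le_INR in Hn. rewrite <- (ln_exp M). apply ln_increasing; [apply exp_pos | lra].
Qed.

Lemma cv_infty_sqrt u : cv_infty u -> cv_infty (fun n => sqrt (u n)).
Proof.
  intros Hu M. destruct (Hu (M * M)) as [N HN]. exists N. intros n Hn. specialize (HN n Hn).
  destruct (Rle_or_lt M 0) as [HM|HM].
  - assert (Hu0 : 0 < u n) by nra. pose proof (sqrt_lt_R0 _ Hu0). lra.
  - rewrite <- (sqrt_square M) by lra. apply sqrt_lt_1; nra.
Qed.

Lemma overhead_cv : Un_cv overhead 0.
Proof.
  assert (H2 : Un_cv (fun _ => 2) 2).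
  { intros e He. exists 0%nat. intros n _. unfold R_dist. rewrite Rminus_diag, Rabs_R0. exact He. }
  replace 0 with (2 * 0 + 0) by ring.
  apply CV_plus; [apply CV_mult; [exact H2|] |];
    apply cv_infty_cv_0; [apply cv_infty_sqrt|]; apply cv_infty_ln_INR.
Qed.

Theorem mainTheorem9 :
  exists eps : nat -> R,
    Un_cv eps 0 /\
    forall (r : nat), (2 <= r)%nat ->
    forall (X : Type) (F : (X -> bool) -> Prop) (d k : nat),
      opt_std_le F d ->
      amb_forces r F k ->
      INR k <= INR d * 2 ^ r * ln (INR r) * (1 + eps r).
Proof.
  exists overhead. split; [exact overhead_cv|].
  intros r Hr X F d k Hd Hk.
  rewrite Rmult_assoc, ln_mul_one_plus_overhead by exact Hr.
  exact (amb_mistakes_le Hr Hd Hk).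
Qed.
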